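(* Let $I=(N,O,\succsim)$ be a general instance and $p$ a generalized deterministic matching for $I$, with associated deterministic matching $p'$ for the associated instance $I'=(N',O',\succsim')$. Then $p$ has no envy, is individually rational and is non-wasteful if and only if $p'$ is weakly stable.
   Context: General instance: $N=\{1,\dots,n\}$ is a set of agents and $O=\{o_1,\dots,o_m\}$ a set of objects ($m,n\ge1$ arbitrary); $\emptyset$ denotes the null object (being unmatched). Each agent $i$ has a weak order $\succsim_i$ over $O\cup\{\emptyset\}$ and each object $o$ a weak order $\succsim_o$ over $N\cup\{\emptyset\}$, such that for each $(i,o)$ either $o\succ_i\emptyset$ or $\emptyset\succ_i o$, and either $i\succ_o\emptyset$ or $\emptyset\succ_o i$. $o$ is acceptable to $i$ if $o\succ_i\emptyset$, $i$ is acceptable to $o$ if $i\succ_o\emptyset$; $(i,o)$ is an acceptable pair if both hold. A generalized random matching is an $n\times m$ matrix $p$ with $p(i,o)\ge0$, $\sum_{o}p(i,o)\le1$ for each $i$, $\sum_i p(i,o)\le1$ for each $o$; it is deterministic if all entries are in $\{0,1\}$. $p$ has no envy if there exist no $i,j\in N$, $o\in O$ with $o\succ_i\emptyset$, $\sum_{o':o'\succsim_i o}p(i,o')=0$, $p(j,o)=1$ and $i\succ_o j$. $p$ is non-wasteful if there is no acceptable pair $(i,o)$ with $\sum_{o':o'\succsim_i o}p(i,o')<1$ and $\sum_{j\in N}p(j,o)<1$. $p$ is individually rational if $p(i,o)=0$ whenever $o$ is unacceptable to $i$ or $i$ is unacceptable to $o$. Associated instance: $D=\{d_1,\dots,d_m\}$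 (dummy agents), $\Phi=\{\phi_1,\dots,\phi_n\}$ (null objects), $N'=N\cup D$, $O'=O\cup\Phi$. Weak orders $\succsim'$ (blocks listed from best to worst, consecutive blocks strictly ordered): for $i\in N$: the objects acceptable to $i$ ordered by $\succsim_i$, then $\phi_i$, then $\phi_k$ ($k\ne i$) in increasing index, then the objects unacceptable to $i$ ordered by $\succsim_i$; for $o_j\in O$: agents acceptable to $o_j$ ordered by $\succsim_{o_j}$, then $d_j$, then $d_k$ ($k\neq j$) in increasing index, then agents unacceptable to $o_j$ ordered by $\succsim_{o_j}$; for $d_j$: $o_j$, then the other objects of $O$ in increasing index, then the null objects with $\phi_k\succsim'_{d_j}\phi_l$ iff $k\succsim_{o_j}l$; for $\phi_i$: $i$, then the other agents of $N$ in increasing index, then the dummy agents with $d_k\succsim'_{\phi_i}d_l$ iff $o_k\succsim_i o_l$. The associated matching $p'$ is the $(n+m)\times(n+m)$ matrix with $p'(i,o_j)=p(i,o_j)$, $p'(d_j,\phi_i)=p(i,o_j)$, $p'(i,\phi_i)=1-\sum_{o\in O}p(i,o)$, $p'(d_j,o_j)=1-\sum_{i\in N}p(i,o_j)$ and all other entries $0$. A deterministic matching $q$ for $I'$ is weakly stable if there are no $a,b\in N'$, $c,c'\in O'$ with $q(a,c')=1$, $q(b,c)=1$, $c\succ'_a c'$ and $a\succ'_c b$. *)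

From mathcomp Require Import all_boot all_order all_algebra.
Set Implicit Arguments. Unset Strict Implicit. Unset Printing Implicit Defensive.
Import Order.TTheory GRing.Theory Num.Theory.
Local Open Scope ring_scope.

(* Agents N = 'I_n, objects O = 'I_m, the null object is None. *)

Definition weak_order (T : Type) (r : rel T) := total r /\ transitive r.

Definition sp (T : Type) (r : rel T) : rel T := fun x y => r x y && ~~ r y x.

Section Defs.
Variables (n m : nat).
Variable pa : 'I_n -> rel (option 'I_m).
Variable po : 'I_m -> rel (option 'I_n).

Definition general_instance :=
  [/\ forall i, weak_order (pa i),
      forall o, weak_order (po o),
      forall i o, sp (pa i) (Some o) None \/ sp (pa i) None (Some o)
    & forall i o, sp (po o) (Some i) None \/ sp (po o) None (Some i)].

Definition acc_ag (i : 'I_n) (o : 'I_m) := sp (pa i) (Some o) None.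
Definition acc_ob (o : 'I_m) (i : 'I_n) := sp (po o) (Some i) None.
Definition unacc_ag (i : 'I_n) (o : 'I_m) := sp (pa i) None (Some o).
Definition unacc_ob (o : 'I_m) (i : 'I_n) := sp (po o) None (Some i).

Section Matchings.
Variable R : realFieldType.
Variable p : 'M[R]_(n, m).

Definition gen_random_matching :=
  [/\ forall i o, 0 <= p i o,
      forall i, \sum_(o < m) p i o <= 1
    & forall o, \sum_(i < n) p i o <= 1].

Definition deterministic := forall i o, p i o = 0 \/ p i o = 1.

Definition gen_deterministic_matching := gen_random_matching /\ deterministic.

Definition no_envy :=
  ~ exists (i j : 'I_n) (o : 'I_m),
      [/\ sp (pa i) (Some o) None,
          \sum_(o' < m | pa i (Some o') (Some o)) p i o' = 0,
          p j o = 1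
        & sp (po o) (Some i) (Some j)].

Definition non_wasteful :=
  ~ exists (i : 'I_n) (o : 'I_m),
      [/\ acc_ag i o, acc_ob o i,
          \sum_(o' < m | pa i (Some o') (Some o)) p i o' < 1
        & \sum_(j < n) p j o < 1].

Definition individually_rational :=
  forall i o, unacc_ag i o \/ unacc_ob o i -> p i o = 0.
End Matchings.

(* Associated instance: N' = N + D  ('I_n + 'I_m, inr j = d_j),
                        O' = O + Phi ('I_m + 'I_n, inr i = phi_i). *)
Definition agentT := ('I_n + 'I_m)%type.
Definition objT := ('I_m + 'I_n)%type.

(* lexicographic "blocks" ordering: smaller block is better, inside a block use w *)
Definition blockrel (T : Type) (bk : T -> nat) (w : rel T) : rel T :=
  fun x y => (bk x < bk y)%N || ((bk x == bk y) && w x y).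

Definition bkA (i : 'I_n) (c : objT) : nat :=
  match c with
  | inl o => if acc_ag i o then 0 else 3
  | inr k => if k == i then 1 else 2
  end%N.
Definition wA (i : 'I_n) : rel objT := fun c c' =>
  match c, c' with
  | inl o, inl o' => pa i (Some o) (Some o')
  | inr k, inr l => (k <= l)%N
  | _, _ => true
  end.

Definition bkD (j : 'I_m) (c : objT) : nat :=
  match c with
  | inl o => if o == j then 0 else 1
  | inr _ => 2
  end%N.
Definition wD (j : 'I_m) : rel objT := fun c c' =>
  match c, c' with
  | inl o, inl o' => (o <= o')%N
  | inr k, inr l => po j (Some k) (Some l)
  | _, _ => true
  end.

Definition bkO (j : 'I_m) (a : agentT) : nat :=
  match a with
  | inl i => if acc_ob j i then 0 else 3
  | inr k => if k == j then 1 else 2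
  end%N.
Definition wO (j : 'I_m) : rel agentT := fun a a' =>
  match a, a' with
  | inl i, inl i' => po j (Some i) (Some i')
  | inr k, inr l => (k <= l)%N
  | _, _ => true
  end.

Definition bkP (i : 'I_n) (a : agentT) : nat :=
  match a with
  | inl k => if k == i then 0 else 1
  | inr _ => 2
  end%N.
Definition wP (i : 'I_n) : rel agentT := fun a a' =>
  match a, a' with
  | inl k, inl l => (k <= l)%N
  | inr k, inr l => pa i (Some k) (Some l)
  | _, _ => true
  end.

Definition prefN' (a : agentT) : rel objT :=
  match a with
  | inl i => blockrel (bkA i) (wA i)
  | inr j => blockrel (bkD j) (wD j)
  end.

Definition prefO' (c : objT) : rel agentT :=
  match c with
  | inl j => blockrel (bkO j) (wO j)
  | inr i => blockrel (bkP i) (wP i)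
  end.

Definition assoc (R : realFieldType) (p : 'M[R]_(n, m)) (a : agentT) (c : objT) : R :=
  match a, c with
  | inl i, inl j => p i j
  | inr j, inr i => p i j
  | inl i, inr k => if k == i then 1 - \sum_(o < m) p i o else 0
  | inr j, inl k => if k == j then 1 - \sum_(i < n) p i j else 0
  end.

Definition weakly_stable (R : realFieldType) (q : agentT -> objT -> R) :=
  ~ exists (a b : agentT) (c c' : objT),
      [/\ q a c' = 1, q b c = 1, sp (prefN' a) c c' & sp (prefO' c) a b].
End Defs.

(* In the associated matching p', an agent left unmatched by p holds its own
   null object phi_i and an unmatched object o_j holds its own dummy d_j.  The
   block structure of the associated preferences ranks acceptable partners above
   one's own dummy/null, which is above the other dummies/nulls, which are above
   the unacceptable partners.  Hence a pair blocking p' is of one of three kinds: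
   - an agent i and an object o: then i is matched to nothing it likes as much
     as o, and o holds either an agent it ranks below i (envy) or its dummy
     (waste);
   - an agent and its own null object, or an object and its own dummy: this
     happens exactly when p matches an unacceptable pair;
   - a dummy d_j and a null object phi_k: d_j holds phi_i where p matches i to
     o_j, phi_k holds d_j' where p matches k to o_j', and the two strict
     preferences say that k envies i at o_j.
   Conversely, envy, waste and unacceptable matches yield such blocking pairs. *)

From mathcomp Require Import all_boot all_order all_algebra.
From mathcomp Require Import lra.
Set Implicit Arguments. Unset Strict Implicit. Unset Printing Implicit Defensive.
Import Order.TTheory GRing.Theory Num.Theory.
Local Open Scope ring_scope.

Section StrictPart.
Variables (T : Type) (r : rel T).

Lemma sp_irr x : sp r x x = false.
Proof. by rewrite /sp; case: (r x x). Qed.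

Lemma sp_le x y : sp r x y -> r x y.
Proof. by case/andP. Qed.

Lemma sp_asym x y : sp r x y -> sp r y x = false.
Proof. by case/andP => rxy _; rewrite /sp rxy andbF. Qed.

Hypothesis r_wo : weak_order r.

Lemma le_sp_trans x y z : r x y -> sp r y z -> sp r x z.
Proof.
case: r_wo => _ r_tr rxy /andP [ryz nrzy]; apply/andP; split; first exact: r_tr ryz.
by apply: contra nrzy => rzx; exact: r_tr rxy.
Qed.

Lemma nle_sp x y : ~~ r x y -> sp r y x.
Proof.
case: r_wo => r_tot _ nrxy; rewrite /sp nrxy andbT.
by case/orP: (r_tot x y) => //; rewrite (negbTE nrxy).
Qed.

End StrictPart.

Lemma sp_blockrel (T : Type) (bk : T -> nat) (w : rel T) x y :
  sp (blockrel bk w) x y = (bk x < bk y)%N || (bk x == bk y) && sp w x y.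
Proof.
by rewrite /sp /blockrel; case: (ltngtP (bk x) (bk y)); rewrite ?andbT ?andbF.
Qed.

Section ZeroOneSums.
Variables (R : numDomainType) (I : finType) (f : I -> R).
Hypothesis f01 : forall x, f x = 0 \/ f x = 1.

Lemma zero_one_ge0 x : 0 <= f x.
Proof. by case: (f01 x) => ->. Qed.

Lemma zero_one_cases : (forall x, f x = 0) \/ exists x, f x = 1.
Proof.
case: (pickP (fun x => f x == 1)) => [x /eqP fx1 | none].
  by right; exists x.
by left => x; case: (f01 x) => // fx1; move: (none x); rewrite fx1 eqxx.
Qed.

Lemma zero_one_support x0 : \sum_x f x <= 1 -> f x0 = 1 -> forall x, x != x0 -> f x = 0.
Proof.
move=> sum_le1 fx01; have rest0 : \sum_(x | x != x0) f x = 0.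
  apply/eqP; rewrite eq_le sumr_ge0 ?andbT => [|x _]; last exact: zero_one_ge0.
  by move: sum_le1; rewrite (bigD1 x0) //= fx01 gerDl.
by move=> x; apply: (psumr_eq0P _ rest0) => y _; exact: zero_one_ge0.
Qed.

Lemma zero_one_sum_lt1 (P : pred I) : \sum_(x | P x) f x < 1 -> \sum_(x | P x) f x = 0.
Proof.
move=> lt1; apply: big1 => x Px; case: (f01 x) => // fx1.
have : 1 <= \sum_(y | P y) f y.
  by rewrite (bigD1 x) //= fx1 lerDl sumr_ge0 // => y _; exact: zero_one_ge0.
by move/le_lt_trans/(_ lt1); rewrite ltxx.
Qed.

End ZeroOneSums.

Lemma sum_supported_at (R : nmodType) (I : finType) (f : I -> R) x0 :
  (forall x, x != x0 -> f x = 0) ->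
  forall P : pred I, \sum_(x | P x) f x = if P x0 then f x0 else 0.
Proof.
move=> f0 P; case: ifP => Px0; first by apply: big_only1 => // x /f0.
by apply: big1 => x Px; apply: f0; apply: contraTneq Px => ->; rewrite Px0.
Qed.

Section AssociatedMatching.
Variables (R : realFieldType) (n m : nat).
Variables (pa : 'I_n -> rel (option 'I_m)) (po : 'I_m -> rel (option 'I_n)).
Hypothesis pa_wo : forall i, weak_order (pa i).
Hypothesis po_wo : forall o, weak_order (po o).
Variable p : 'M[R]_(n, m).
Hypothesis p01 : deterministic p.
Hypothesis row_le1 : forall i, \sum_o p i o <= 1.
Hypothesis col_le1 : forall o, \sum_i p i o <= 1.

Local Notation q := (assoc p).
Local Notation prefA i := (prefN' pa po (inl i)).
Local Notation prefO o := (prefO' pa po (inl o)).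

Definition desires i o :=
  acc_ag pa i o /\ \sum_(o' < m | pa i (Some o') (Some o)) p i o' = 0.

Lemma row_support i o : p i o = 1 -> forall o', o' != o -> p i o' = 0.
Proof. exact: (zero_one_support (f := p i) (p01 i) (row_le1 i)). Qed.

Lemma col_support i o : p i o = 1 -> forall i', i' != i -> p i' o = 0.
Proof. exact: (zero_one_support (f := p^~ o) (p01^~ o) (col_le1 o)). Qed.

Lemma assoc_null_eq1 i k : q (inl i) (inr k) = 1 -> k = i /\ forall o, p i o = 0.
Proof.
rewrite /=; case: eqP => [-> q1 | _ /esym/eqP]; last by rewrite oner_eq0.
have row0 : \sum_o p i o = 0 by lra.
by split => // o; apply: (psumr_eq0P _ row0) => // o' _; exact: zero_one_ge0.
Qed.

Lemma assoc_dummy_eq1 j k : q (inr j) (inl k) = 1 -> k = j /\ forall i, p i j = 0.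
Proof.
rewrite /=; case: eqP => [-> q1 | _ /esym/eqP]; last by rewrite oner_eq0.
have col0 : \sum_i p i j = 0 by lra.
by split => // i; apply: (psumr_eq0P _ col0) => // i' _; exact: zero_one_ge0.
Qed.

Lemma sp_prefA i o o' : sp (pa i) (Some o) (Some o') -> sp (prefA i) (inl o) (inl o').
Proof.
move=> hsp; rewrite /= sp_blockrel /=.
case: ifP => acc; case: ifP => acc' //=.
by move: acc; rewrite /acc_ag (le_sp_trans (pa_wo i) (sp_le hsp) acc').
Qed.

Lemma sp_prefO o i j : sp (po o) (Some i) (Some j) -> sp (prefO o) (inl i) (inl j).
Proof.
move=> hsp; rewrite /= sp_blockrel /=.
case: ifP => acc; case: ifP => acc' //=.
by move: acc; rewrite /acc_ob (le_sp_trans (po_wo o) (sp_le hsp) acc').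
Qed.

Lemma desires_of_matched i o o' :
  acc_ag pa i o' -> p i o' = 1 -> sp (pa i) (Some o) (Some o') -> desires i o.
Proof.
move=> acc' pio' hsp; split; first exact: (le_sp_trans (pa_wo i) (sp_le hsp) acc').
rewrite (sum_supported_at (row_support pio')).
by case/andP: hsp => _ /negbTE ->.
Qed.

Lemma agent_can_improve i o :
  desires i o -> exists2 c', q (inl i) c' = 1 & sp (prefA i) (inl o) c'.
Proof.
move=> [acc sum0]; case: (zero_one_cases (p01 i)) => [row0 | [o' pio']].
  exists (inr i); first by rewrite /= eqxx big1 ?subr0.
  by rewrite /= sp_blockrel /= acc eqxx.
exists (inl o') => //; apply/sp_prefA/nle_sp => //; apply/negP => le_o'o.
move: sum0; rewrite (sum_supported_at (row_support pio')) le_o'o pio'.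
exact/eqP/oner_neq0.
Qed.

Lemma dummy_improves j c c' :
  q (inr j) c' = 1 -> sp (prefN' pa po (inr j)) c c' ->
  exists2 i, p i j = 1 & forall k, c = inr k -> sp (po j) (Some k) (Some i).
Proof.
case: c' => [l /assoc_dummy_eq1 [-> _] | i pij hsp]; last first.
  by exists i => // k ck; move: hsp; rewrite ck /= sp_blockrel.
rewrite /= sp_blockrel /= eqxx; case: c => [o|k] //=.
by case: (eqVneq o j) => [-> | _] //=; rewrite sp_irr.
Qed.

Section IndividuallyRational.
Hypothesis acc_dec_ag : forall i o, acc_ag pa i o \/ unacc_ag pa i o.
Hypothesis acc_dec_ob : forall i o, acc_ob po o i \/ unacc_ob po o i.
Hypothesis ir : individually_rational pa po p.

Lemma matched_acceptable i o : p i o = 1 -> acc_ag pa i o /\ acc_ob po o i.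
Proof.
move=> pio; have pio_neq0 : p i o <> 0 by rewrite pio; exact/eqP/oner_neq0.
split; [case: (acc_dec_ag i o) | case: (acc_dec_ob i o)] => // u.
  by case: pio_neq0; apply: ir; left.
by case: pio_neq0; apply: ir; right.
Qed.

Lemma agent_improves i c c' :
  q (inl i) c' = 1 -> sp (prefA i) c c' -> exists2 o, c = inl o & desires i o.
Proof.
case: c' => [o' pio' | l /assoc_null_eq1 [-> row0]].
  have [acc' _] := matched_acceptable pio'.
  rewrite /= sp_blockrel /= acc'; case: c => [o|k] /=; last by case: ifP.
  case: ifP => // acc /= hsp; exists o => //; exact: desires_of_matched pio' hsp.
rewrite /= sp_blockrel /= eqxx; case: c => [o|k] /=.
  by case: ifP => // acc _; exists o => //; split => //; rewrite big1.
by case: (eqVneq k i) => [-> | _] //=; rewrite sp_irr.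
Qed.

Lemma object_improves o a b :
  q b (inl o) = 1 -> sp (prefO o) a b ->
  exists i, [/\ a = inl i, acc_ob po o i
             & forall j, p j o = 1 -> sp (po o) (Some i) (Some j)].
Proof.
case: b => [j pjo | l /assoc_dummy_eq1 [<- col0]].
  have [_ acc'] := matched_acceptable pjo.
  rewrite /= sp_blockrel /= acc'; case: a => [i|k] /=; last by case: ifP.
  case: ifP => // acc /= hsp; exists i; split => // j' pj'o.
  case: (eqVneq j' j) => [-> // | /(col_support pjo)].
  by rewrite pj'o => /eqP; rewrite oner_eq0.
rewrite /= sp_blockrel /= eqxx; case: a => [i|k] /=.
  case: ifP => // acc _; exists i; split => // j; rewrite col0 => /eqP.
  by rewrite eq_sym oner_eq0.
by case: (eqVneq k o) => [-> | _] //=; rewrite sp_irr.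
Qed.

Lemma null_improves k j b :
  q b (inr k) = 1 -> sp (prefO' pa po (inr k)) (inr j) b -> desires k j.
Proof.
case: b => [l /assoc_null_eq1 [-> _] | j' pkj'].
  by rewrite /= sp_blockrel /= eqxx.
rewrite /= sp_blockrel /= => hsp.
by have [acc' _] := matched_acceptable pkj'; exact: desires_of_matched pkj' hsp.
Qed.

Lemma fair_weakly_stable :
  no_envy pa po p -> non_wasteful pa po p -> weakly_stable pa po q.
Proof.
move=> ne nw [a [b [c [c' [ac' bc ac_c' ab]]]]].
have envy k i j : desires k j -> p i j = 1 -> sp (po j) (Some k) (Some i) -> False.
  by move=> [? ?] pij hsp; apply: ne; exists k, i, j.
case: a ac' ac_c' ab => [i|j] ac' ac_c' ab.
  have [o ? desire] := agent_improves ac' ac_c'; subst c.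
  have [_ [[<-] acc better]] := object_improves bc ab.
  case: (zero_one_cases (p01^~ o)) => [col0 | [j pjo]].
    case: desire => acc' sum0; apply: nw; exists i, o; split => //.
      by rewrite sum0 ltr01.
    by rewrite big1 ?ltr01.
  exact: envy desire pjo (better j pjo).
have [i pij better] := dummy_improves ac' ac_c'.
case: c bc ab ac_c' better => [o|k] bc ab _ better.
  by have [? []] := object_improves bc ab.
exact: envy (null_improves bc ab) pij (better k erefl).
Qed.

End IndividuallyRational.

Section WeaklyStable.
Hypothesis ws : weakly_stable pa po q.

Lemma weakly_stable_no_envy : no_envy pa po p.
Proof.
move=> [i [j [o [acc sum0 pjo hsp]]]].
have [c' ic' better] := agent_can_improve (conj acc sum0).
by apply: ws; exists (inl i), (inl j), (inl o), c'; split => //; exact: sp_prefO.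
Qed.

Lemma weakly_stable_individually_rational : individually_rational pa po p.
Proof.
move=> i o unacc; case: (p01 i o) => // pio; exfalso; apply: ws.
case: unacc => [u | u].
  have nacc : acc_ag pa i o = false by rewrite /acc_ag (sp_asym u).
  exists (inl i), (inr o), (inr i), (inl o); split => //=.
    by rewrite sp_blockrel /= nacc eqxx.
  by rewrite sp_blockrel /= eqxx.
have nacc : acc_ob po o i = false by rewrite /acc_ob (sp_asym u).
exists (inr o), (inl i), (inl o), (inr i); split => //=.
  by rewrite sp_blockrel /= eqxx.
by rewrite sp_blockrel /= nacc eqxx.
Qed.

Lemma weakly_stable_non_wasteful : non_wasteful pa po p.
Proof.
move=> [i [o [acc_io acc_oi row_lt1 col_lt1]]].
have desire : desires i o by split; last exact: (zero_one_sum_lt1 (p01 i) row_lt1).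
have [c' ic' better] := agent_can_improve desire.
apply: ws; exists (inl i), (inr o), (inl o), c'; split => //.
  by rewrite /= eqxx (zero_one_sum_lt1 (p01^~ o) col_lt1) subr0.
by rewrite /= sp_blockrel /= acc_oi eqxx.
Qed.

End WeaklyStable.

End AssociatedMatching.

Theorem proposition20 (R : realFieldType) (n m : nat)
    (pa : 'I_n -> rel (option 'I_m)) (po : 'I_m -> rel (option 'I_n))
    (p : 'M[R]_(n, m)) :
  (0 < n)%N -> (0 < m)%N ->
  general_instance pa po ->
  gen_deterministic_matching p ->
  (no_envy pa po p /\ individually_rational pa po p /\ non_wasteful pa po p)
  <-> weakly_stable pa po (assoc p).
Proof.
move=> _ _ [pa_wo po_wo acc_dec_ag acc_dec_ob] [[_ row_le1 col_le1] p01].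
split => [[ne [ir nw]] | ws].
  exact: fair_weakly_stable.
split; first exact: weakly_stable_no_envy.
split; first exact: weakly_stable_individually_rational.
exact: weakly_stable_non_wasteful.
Qed.
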